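(* Let $x\in\mathrm{Cay}_n$. (1) If $y\in\mathrm{Cay}_k$ and $y\le x$, then $\gamma(y)\le\gamma(x)$. (2) If $\sigma\in\mathcal{S}_k$ and $\sigma\le\gamma(x)$, then there exists $y\in\mathrm{Cay}_k$ such that $y\le x$ and $\gamma(y)=\sigma$.
   Context: $\mathrm{Cay}_n$ is the set of Cayley permutations of length $n$ (words of positive integers in which every integer from $1$ to the maximum occurs); $\mathcal{S}_k$ is the set of permutations of $[k]$. Containment $y\le x$: indices $i_1<\dots<i_k$ with $x(i_s)<x(i_t)\iff y(s)<y(t)$ and $x(i_s)=x(i_t)\iff y(s)=y(t)$. For $x\in\mathrm{Cay}_n$, $\gamma(x)\in\mathcal{S}_n$ is obtained by sorting the pairs $(x(i),i)$ increasingly by first coordinate, ties by decreasing second coordinate, and reading the second coordinates. *)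

From mathcomp Require Import all_boot.
Set Implicit Arguments. Unset Strict Implicit. Unset Printing Implicit Defensive.

(* Words are sequences of naturals; position s (0-based in Rocq) holds x(s+1). *)

Definition is_cayley (x : seq nat) : bool :=
  all (fun v => 0 < v) x &&
  all (fun v => v \in x) (iota 1 (\max_(v <- x) v)).

Definition Cay (n : nat) (x : seq nat) : bool := (size x == n) && is_cayley x.

Definition is_perm (k : nat) (s : seq nat) : bool := perm_eq s (iota 1 k).

Definition occurs_at (y x : seq nat) (idx : seq nat) : Prop :=
  [/\ size idx = size y, sorted ltn idx, all (fun i => i < size x) idx &
      forall s t, s < size y -> t < size y ->
        ((nth 0 x (nth 0 idx s) < nth 0 x (nth 0 idx t)) = (nth 0 y s < nth 0 y t))
        /\ ((nth 0 x (nth 0 idx s) == nth 0 x (nth 0 idx t)) = (nth 0 y s == nth 0 y t))].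

Definition contained (y x : seq nat) : Prop := exists idx, occurs_at y x idx.

Definition gamma_le (p q : nat * nat) : bool :=
  (p.1 < q.1) || ((p.1 == q.1) && (q.2 <= p.2)).

Definition gamma (x : seq nat) : seq nat :=
  map snd (sort gamma_le [seq (nth 0 x i, i.+1) | i <- iota 0 (size x)]).

From mathcomp Require Import all_boot.

Set Implicit Arguments.
Unset Strict Implicit.
Unset Printing Implicit Defensive.

(* gamma x lists the positions of x sorted by value, ties broken by decreasing
   position, and this order on positions depends only on the relative order of
   the entries.  Hence restricting x to an increasing list P of positions
   restricts gamma x to its entries lying in P, relabelled monotonically
   (filter_gamma0_subword): gamma of a subword of x is order-isomorphic to a
   subsequence of gamma x, which gives (1).  Conversely, an occurrence of sigma
   in gamma x selects a set P of positions of x; gamma of the subword of x at P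
   is a permutation order-isomorphic to sigma, hence equal to it, and the
   standardization of that subword is the required Cayley permutation. *)

Definition same_pattern (y z : seq nat) : Prop :=
  size y = size z /\
  forall s t, s < size y -> t < size y ->
    (nth 0 y s <= nth 0 y t) = (nth 0 z s <= nth 0 z t).

Lemma same_pattern_refl y : same_pattern y y.
Proof. by []. Qed.

Lemma same_pattern_sym y z : same_pattern y z -> same_pattern z y.
Proof. by case=> e yz; split=> // s t; rewrite -e => hs ht; rewrite yz. Qed.

Lemma same_pattern_trans z y w :
  same_pattern y z -> same_pattern z w -> same_pattern y w.
Proof.
case=> e1 yz [e2 zw]; split=> [|s t hs ht]; first by rewrite e1.
by rewrite yz // zw // -e1.
Qed.

Lemma same_pattern_map (f g : nat -> nat) s :
  {in s &, forall a b, (f a <= f b) = (g a <= g b)} ->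
  same_pattern (map f s) (map g s).
Proof.
move=> fg; split=> [|i j]; rewrite !size_map // => hi hj.
by rewrite !(nth_map 0) // fg ?mem_nth.
Qed.

Lemma count_ltn_lt (s : seq nat) v w : v \in s -> v < w ->
  count (fun u => u < v) s < count (fun u => u < w) s.
Proof.
move=> hv lt_vw.
have -> : count (fun u => u < w) s =
    count (fun u => u < v) s + count (fun u => v <= u < w) s.
  elim: s {hv} => //= a s ->; case: (ltnP a v) => [lt_av|le_va] /=.
  - by rewrite (ltn_trans lt_av lt_vw) add0n addnA.
  - by rewrite add0n addnCA.
by rewrite -addn1 leq_add2l -has_count; apply/hasP; exists v; rewrite ?leqnn.
Qed.

Lemma count_ltn_inj (s : seq nat) :
  {in s &, injective (fun v => count (fun w => w < v) s)}.
Proof.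
move=> v w hv hw e.
by case: (ltngtP v w) => // [/(count_ltn_lt hv)|/(count_ltn_lt hw)]; rewrite e ltnn.
Qed.

(* An entry is determined by the number of entries below it, which is the
   same at corresponding positions of [p] and [q]. *)
Lemma same_pattern_perm_eq p q : perm_eq p q -> same_pattern p q -> p = q.
Proof.
move=> pq [e pat]; apply: (@eq_from_nth _ 0) => // s hs.
pose rank r v := count (fun u => u < v) r.
have rank_nth r i : i < size r ->
    rank r (nth 0 r i) = count (fun t => ~~ (nth 0 r i <= nth 0 r t)) (iota 0 (size r)).
  move=> hi; rewrite /rank -[X in count _ X](mkseq_nth 0 r) count_map.
  by apply: eq_count => t; rewrite /= ltnNge.
apply: (@count_ltn_inj p _ _ (mem_nth 0 hs)) => /=.
  by rewrite (perm_mem pq) mem_nth -?e.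
rewrite [RHS](permP pq) -/(rank p _) -/(rank q _) !rank_nth -?e //.
by apply: eq_in_count => t; rewrite mem_iota => /andP[_ ht]; rewrite pat.
Qed.

Definition subword (x idx : seq nat) : seq nat := map (nth 0 x) idx.

Lemma subword_map (f : nat -> nat) x idx :
  all (fun i => i < size x) idx -> subword (map f x) idx = map f (subword x idx).
Proof.
move=> /allP idx_lt; rewrite /subword -map_comp; apply/eq_in_map => i /idx_lt hi.
exact: nth_map.
Qed.

Lemma occurs_atE y x idx :
  occurs_at y x idx <->
  [/\ sorted ltn idx, all (fun i => i < size x) idx & same_pattern y (subword x idx)].
Proof.
rewrite /subword; split.
- case=> sz sorted_idx idx_lt cmp; split=> //; split=> [|s t hs ht].
    by rewrite size_map.
  case: (cmp s t hs ht) => lt eq; rewrite -sz in hs ht.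
  by rewrite !(nth_map 0) // [LHS]leq_eqVlt [RHS]leq_eqVlt lt eq.
- case=> sorted_idx idx_lt [sz cmp]; rewrite size_map in sz; split=> // s t hs ht.
  move: (cmp s t hs ht) (cmp t s ht hs); rewrite sz in hs ht.
  rewrite !(nth_map 0) // => le_st le_ts.
  by rewrite !ltnNge !eqn_leq le_st le_ts.
Qed.

Lemma contained_subword y x idx :
  sorted ltn idx -> all (fun i => i < size x) idx -> same_pattern y (subword x idx) ->
  contained y x.
Proof. by move=> sorted_idx idx_lt pat; exists idx; apply/occurs_atE. Qed.

Lemma contained_pattern y z x : same_pattern y z -> contained z x -> contained y x.
Proof.
move=> yz [idx /occurs_atE[sorted_idx idx_lt pat]].
exact: contained_subword sorted_idx idx_lt (same_pattern_trans yz pat).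
Qed.

Lemma filter_iota_sorted n (P : seq nat) :
  sorted ltn P -> all (fun i => i < n) P -> [seq i <- iota 0 n | i \in P] = P.
Proof.
move=> sorted_P /allP P_lt; apply: (irr_sorted_eq ltn_trans ltnn) => //.
  exact/sorted_filter/iota_ltn_sorted/ltn_trans.
by move=> i; rewrite mem_filter mem_iota andb_idr // => /P_lt.
Qed.

Lemma subseq_contained y x : subseq y x -> contained y x.
Proof.
case/subseqP=> m _ ->; set idx := mask m (iota 0 (size x)).
have -> : mask m x = subword x idx by rewrite /subword map_mask map_nth_iota0 // take_size.
apply: contained_subword (same_pattern_refl _).
  exact/sorted_mask/iota_ltn_sorted/ltn_trans.
by apply/allP => i /mem_mask; rewrite mem_iota.
Qed.

Lemma subword_subseq x idx :
  sorted ltn idx -> all (fun i => i < size x) idx -> subseq (subword x idx) x.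
Proof.
move=> sorted_idx idx_lt; rewrite -(filter_iota_sorted sorted_idx idx_lt).
by rewrite -{3}(mkseq_nth 0 x) map_subseq ?filter_subseq.
Qed.

Lemma nth_leq_mono (P : seq nat) :
  sorted ltn P -> {in [pred i | i < size P] &, {mono nth 0 P : i j / i <= j}}.
Proof. by move=> sorted_P; apply/leq_mono_in/(sorted_ltn_nth ltn_trans). Qed.

Lemma eq_in_sort (T : eqType) (leT leT' : rel T) (s : seq T) :
  total leT' -> transitive leT' -> antisymmetric leT' ->
  {in s &, leT =2 leT'} -> sort leT s = sort leT' s.
Proof.
move=> leT'_total leT'_tr leT'_anti eq_le.
have leT_total : {in s &, total leT}.
  by move=> a b ha hb; rewrite !eq_le ?leT'_total.
apply: (sorted_eq leT'_tr leT'_anti); last by rewrite perm_sort perm_sym perm_sort.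
  rewrite -(eq_in_sorted eq_le); last by apply/allP => a; rewrite mem_sort.
  by apply: (sort_sorted_in (P := mem s)) (allss s) => a b; apply: leT_total.
exact: sort_sorted.
Qed.

Definition gamma_rel (x : seq nat) : rel nat :=
  fun i j => gamma_le (nth 0 x i, i.+1) (nth 0 x j, j.+1).

Lemma gamma_relE x i j :
  gamma_rel x i j = (nth 0 x i < nth 0 x j) || (nth 0 x i == nth 0 x j) && (j <= i).
Proof. by []. Qed.

Lemma gamma_rel_total x : total (gamma_rel x).
Proof.
by move=> i j; rewrite !gamma_relE; case: ltngtP => //= _; rewrite orbC leq_total.
Qed.

Lemma gamma_rel_trans x : transitive (gamma_rel x).
Proof.
move=> j i l; rewrite !gamma_relE.
case: (ltngtP (nth 0 x i) (nth 0 x j)) => //= [lt_ij|eq_ij];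
case: (ltngtP (nth 0 x j) (nth 0 x l)) => //= [lt_jl|eq_jl].
- by rewrite (ltn_trans lt_ij lt_jl).
- by rewrite -eq_jl lt_ij.
- by rewrite eq_ij lt_jl.
- by move=> le_ji le_lj; rewrite eq_ij eq_jl eqxx ltnn (leq_trans le_lj le_ji).
Qed.

Lemma gamma_rel_anti x : antisymmetric (gamma_rel x).
Proof.
move=> i j; rewrite !gamma_relE; case: ltngtP => //= _ /andP[le_ji le_ij].
by apply/eqP; rewrite eqn_leq le_ij le_ji.
Qed.

Definition gamma0 (x : seq nat) : seq nat := sort (gamma_rel x) (iota 0 (size x)).

Lemma gammaE x : gamma x = map succn (gamma0 x).
Proof. by rewrite /gamma sort_map -map_comp. Qed.

Lemma perm_gamma0 x : perm_eq (gamma0 x) (iota 0 (size x)).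
Proof. by rewrite perm_sort. Qed.

Lemma mem_gamma0 x i : (i \in gamma0 x) = (i < size x).
Proof. by rewrite (perm_mem (perm_gamma0 x)) mem_iota. Qed.

Lemma gamma0_uniq x : uniq (gamma0 x).
Proof. by rewrite (perm_uniq (perm_gamma0 x)) iota_uniq. Qed.

Lemma size_gamma0 x : size (gamma0 x) = size x.
Proof. by rewrite (perm_size (perm_gamma0 x)) size_iota. Qed.

Lemma size_gamma x : size (gamma x) = size x.
Proof. by rewrite gammaE size_map size_gamma0. Qed.

Lemma perm_gamma x : perm_eq (gamma x) (iota 1 (size x)).
Proof. by rewrite gammaE (iotaDl 1 0) perm_map ?perm_gamma0. Qed.

Lemma gamma0_pattern y z : same_pattern y z -> gamma0 y = gamma0 z.
Proof.
case=> sz cmp; rewrite /gamma0 sz.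
apply: (eq_in_sort (@gamma_rel_total z) (@gamma_rel_trans z) (@gamma_rel_anti z)).
move=> i j /[!mem_iota] /= /[!add0n] hi hj; rewrite -sz in hi hj.
by rewrite !gamma_relE !ltnNge !eqn_leq !cmp.
Qed.

Lemma gamma_pattern y z : same_pattern y z -> gamma y = gamma z.
Proof. by rewrite !gammaE => /gamma0_pattern->. Qed.

Lemma filter_gamma0_subword x P :
  sorted ltn P -> all (fun i => i < size x) P ->
  [seq i <- gamma0 x | i \in P] = map (nth 0 P) (gamma0 (subword x P)).
Proof.
move=> sorted_P P_lt; rewrite /gamma0 filter_sort ?filter_iota_sorted //;
  [|exact: gamma_rel_total|exact: gamma_rel_trans].
rewrite -{1}(mkseq_nth 0 P) sort_map /subword size_map; congr map.
apply: (eq_in_sort (@gamma_rel_total _) (@gamma_rel_trans _) (@gamma_rel_anti _)).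
move=> i j /[!mem_iota] /= /[!add0n] hi hj.
by rewrite /relpre !gamma_relE !(nth_map 0) // nth_leq_mono.
Qed.

Lemma gamma_subword_pattern x P :
  sorted ltn P -> all (fun i => i < size x) P ->
  same_pattern (gamma (subword x P)) (map succn [seq i <- gamma0 x | i \in P]).
Proof.
move=> sorted_P P_lt; rewrite filter_gamma0_subword // gammaE -map_comp.
apply: same_pattern_map => a b; rewrite !mem_gamma0 size_map => ha hb /=.
by rewrite !ltnS nth_leq_mono.
Qed.

Lemma contained_gamma y x : contained y x -> contained (gamma y) (gamma x).
Proof.
case=> idx /occurs_atE[sorted_idx idx_lt pat].
rewrite (gamma_pattern pat).
apply: contained_pattern (gamma_subword_pattern sorted_idx idx_lt) _.
by apply: subseq_contained; rewrite gammaE map_subseq ?filter_subseq.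
Qed.

Lemma contained_gamma_subword sigma x : contained sigma (gamma x) ->
  exists P, [/\ sorted ltn P, all (fun i => i < size x) P &
                same_pattern sigma (gamma (subword x P))].
Proof.
case=> J /occurs_atE[sorted_J]; rewrite size_gamma => J_lt pat.
set A := subword (gamma0 x) J.
have sub_A : subseq A (gamma0 x) by apply: subword_subseq; rewrite ?size_gamma0.
have uniq_A : uniq A := subseq_uniq sub_A (gamma0_uniq x).
set P := sort leq A.
have sorted_P : sorted ltn P.
  by rewrite ltn_sorted_uniq_leq sort_uniq uniq_A (sort_sorted leq_total).
have P_lt : all (fun i => i < size x) P.
  by apply/allP => i; rewrite mem_sort -mem_gamma0 => /(mem_subseq sub_A).
exists P; split=> //; apply: (same_pattern_trans pat); apply: same_pattern_sym.
apply: (same_pattern_trans (gamma_subword_pattern sorted_P P_lt)).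
have /(subseq_uniqP (gamma0_uniq x)) filter_A := sub_A.
rewrite (eq_filter (mem_sort leq A)) -filter_A.
by rewrite gammaE subword_map ?size_gamma0.
Qed.

Definition standardize (z : seq nat) : seq nat :=
  map (fun v => (index v (sort leq (undup z))).+1) z.

Section Standardization.

Variable z : seq nat.
Let vals := sort leq (undup z).

Lemma uniq_vals : uniq vals.
Proof. by rewrite sort_uniq undup_uniq. Qed.

Lemma sorted_vals : sorted ltn vals.
Proof. by rewrite ltn_sorted_uniq_leq uniq_vals (sort_sorted leq_total). Qed.

Lemma mem_vals v : (v \in vals) = (v \in z).
Proof. by rewrite mem_sort mem_undup. Qed.

Lemma same_pattern_standardize : same_pattern (standardize z) z.
Proof.
rewrite -[X in same_pattern _ X](map_id z); apply: same_pattern_map => v w hv hw.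
rewrite -mem_vals in hv; rewrite -mem_vals in hw.
rewrite ltnS -{2}(nth_index 0 hv) -{2}(nth_index 0 hw).
by rewrite nth_leq_mono ?sorted_vals ?inE ?index_mem.
Qed.

Lemma is_cayley_standardize : is_cayley (standardize z).
Proof.
apply/andP; split; first by apply/allP => _ /mapP[v _ ->].
apply/allP => v; rewrite mem_iota => /andP[v_gt0 v_le].
have max_le : \max_(w <- standardize z) w <= size vals.
  by apply/bigmax_leqP_seq => _ /mapP[w hw ->] _; rewrite index_mem mem_vals.
have v_lt : v.-1 < size vals.
  by rewrite prednK //; apply: leq_trans max_le; rewrite -ltnS -add1n.
apply/mapP; exists (nth 0 vals v.-1); first by rewrite -mem_vals mem_nth.
by rewrite index_uniq ?uniq_vals // prednK.
Qed.

End Standardization.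

Theorem corollary4p7 (n : nat) (x : seq nat) : Cay n x ->
  (forall (k : nat) (y : seq nat), Cay k y -> contained y x ->
     contained (gamma y) (gamma x)) /\
  (forall (k : nat) (sigma : seq nat), is_perm k sigma -> contained sigma (gamma x) ->
     exists y : seq nat, [/\ Cay k y, contained y x & gamma y = sigma]).
Proof.
(* Neither part uses that [x] is a Cayley permutation. *)
move=> _; split=> [k y _|k sigma perm_sigma]; first exact: contained_gamma.
case/contained_gamma_subword=> P [sorted_P P_lt pat].
set z := subword x P.
have size_z : size z = k.
  by case: pat => /esym; rewrite size_gamma (perm_size perm_sigma) size_iota.
have gamma_z : gamma z = sigma.
  apply: same_pattern_perm_eq (same_pattern_sym pat).
  by rewrite (perm_trans (perm_gamma z)) // size_z perm_sym.
exists (standardize z); split.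
- by rewrite /Cay size_map size_z eqxx is_cayley_standardize.
- exact: contained_subword sorted_P P_lt (same_pattern_standardize z).
- by rewrite (gamma_pattern (same_pattern_standardize z)).
Qed.
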